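(* Let $(P_n)_{n\ge 0}$ be the Padovan sequence and for $1\le b\le 3$ and $m\ge 0$ let $r_m^{(3,b)}=\sum_{k=0}^{m}P_{3k+b}$. Then for every $b\in\{1,2,3\}$ and every $m\ge 3$, $$r_m^{(3,b)}=3r_{m-1}^{(3,b)}-2r_{m-2}^{(3,b)}+r_{m-3}^{(3,b)}+1.$$
   Context: The Padovan sequence is defined by $P_0=P_1=P_2=1$ and $P_{n+3}=P_{n+1}+P_n$. *)

From Stdlib Require Import Arith ZArith List.

(* Padovan sequence: P_0 = P_1 = P_2 = 1, P_{n+3} = P_{n+1} + P_n. *)
Fixpoint padovan (n : nat) : nat :=
  match n with
  | 0 => 1
  | 1 => 1
  | 2 => 1
  | S (S (S k) as n2) =>
      match n2 with
      | S k1 => padovan k1 + padovan k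
      | 0 => 0
      end
  end.

Fixpoint r3 (b m : nat) : nat :=
  match m with
  | 0 => padovan b
  | S m' => r3 b m' + padovan (3 * m + b)
  end.

Lemma padovan_rec n : padovan (S (S (S n))) = padovan (S n) + padovan n.
Proof. reflexivity. Qed.

Example padovan_check :
  map padovan (seq 0 11) = 1 :: 1 :: 1 :: 2 :: 2 :: 3 :: 4 :: 5 :: 7 :: 9 :: 12 :: nil.
Proof. reflexivity. Qed.

(** The subsequence [Q_k = P_(3k+b)] satisfies [Q_(k+3) = 3 Q_(k+2) - 2 Q_(k+1) + Q_k],
    since [α^3] is a root of [y^3 - 3y^2 + 2y - 1] whenever [α^3 = α + 1].  Applying
    the same recurrence operator to the partial sums [r_m] of [Q] gives a telescoping
    difference, so [r_(m+3) - 3 r_(m+2) + 2 r_(m+1) - r_m] does not depend on [m]; its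
    value at [m = 0] is [P_(9+b) - 2 P_(6+b) - P_b], which is [1] for [b = 1, 2, 3]. *)

From Stdlib Require Import Arith ZArith Lia.

Lemma padovan_rec_stride3 n :
  padovan (n + 9) + 2 * padovan (n + 3) = 3 * padovan (n + 6) + padovan n.
Proof. rewrite !(Nat.add_comm n); cbn [Nat.add]; rewrite !padovan_rec; lia. Qed.

Section PartialSumsOfLinearRecurrence.

Variables f s : nat -> Z.
Hypothesis f_rec : forall n, f (3 + n) = (3 * f (2 + n) - 2 * f (1 + n) + f n)%Z.
Hypothesis s_succ : forall m, s (S m) = (s m + f (S m))%Z.

Lemma partial_sums_rec_defect_const m :
  (s (3 + m) - 3 * s (2 + m) + 2 * s (1 + m) - s m =
   s 3 - 3 * s 2 + 2 * s 1 - s 0)%Z.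
Proof.
  induction m as [|m IHm]; [reflexivity|].
  pose proof (f_rec (S m)) as Hf.
  cbn [Nat.add] in *.
  rewrite <- IHm, !s_succ.
  lia.
Qed.

End PartialSumsOfLinearRecurrence.

Lemma padovan_3k_rec b n :
  Z.of_nat (padovan (3 * (3 + n) + b)) =
    (3 * Z.of_nat (padovan (3 * (2 + n) + b))
     - 2 * Z.of_nat (padovan (3 * (1 + n) + b))
     + Z.of_nat (padovan (3 * n + b)))%Z.
Proof.
  pose proof (padovan_rec_stride3 (3 * n + b)) as H.
  replace (3 * (3 + n) + b) with (3 * n + b + 9) by lia.
  replace (3 * (2 + n) + b) with (3 * n + b + 6) by lia.
  replace (3 * (1 + n) + b) with (3 * n + b + 3) by lia.
  lia.
Qed.

Lemma r3_rec_defect_initial b : 1 <= b <= 3 ->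
  (Z.of_nat (r3 b 3) - 3 * Z.of_nat (r3 b 2) + 2 * Z.of_nat (r3 b 1)
   - Z.of_nat (r3 b 0) = 1)%Z.
Proof. intros Hb; destruct b as [|[|[|[|b]]]]; solve [lia | reflexivity]. Qed.

Theorem theorem4p3 : forall b m : nat, 1 <= b <= 3 -> 3 <= m ->
  Z.of_nat (r3 b m) =
    (3 * Z.of_nat (r3 b (m - 1)) - 2 * Z.of_nat (r3 b (m - 2))
     + Z.of_nat (r3 b (m - 3)) + 1)%Z.
Proof.
  intros b m Hb Hm.
  pose proof (partial_sums_rec_defect_const
                (fun k => Z.of_nat (padovan (3 * k + b)))
                (fun k => Z.of_nat (r3 b k))
                (padovan_3k_rec b)
                (fun k => Nat2Z.inj_add (r3 b k) _)
                (m - 3)) as Hdefect.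
  pose proof (r3_rec_defect_initial b Hb) as Hinit.
  cbv beta in Hdefect.
  replace (3 + (m - 3)) with m in Hdefect by lia.
  replace (2 + (m - 3)) with (m - 1) in Hdefect by lia.
  replace (1 + (m - 3)) with (m - 2) in Hdefect by lia.
  lia.
Qed.
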